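(* Let $n$ be any positive integer. There exists a 2-layer transformer, with a suitable position embedding, that performs function evaluation for domain $[n]$ in the ''consecutive positions, permuted keys'' presentation. That is, for every $f:[n]\to[n]$, every permutation $\pi$ of $[n]$ and every $i^*\in[n]$, on the input $\pi(0),f(\pi(0)),\pi(1),f(\pi(1)),\dots,\pi(n-1),f(\pi(n-1)),i^*$ of length $2n+1$, it outputs $f(i^* )$. The transformer uses leftmost hard attention, one head per attention layer, embedding dimension $7$, $O(\log n)$ bits of precision, a residual connection in the first attention layer, and no MLP layer.
   Context: Notation: $[n]=\{0,\dots,n-1\}$. Transformer model (encoder-only, no masking, no layer normalization). A transformer of embedding dimension $d$ consists of three parts. - An input embedding sends position $i$ with token $x_i$ to $\mathbf{w}(x_i)+\mathbf{p}(i)\in\mathbb{R}^d$. The token embedding $\mathbf{w}$ and the position embedding $\mathbf{p}$ may be chosen freely. - Length-preserving layers follow. - The output is the index in $[n]$ maximizing $\mathbf{U}\mathbf{Y}[L-1]$, where $\mathbf{U}\in\mathbb{R}^{n\times d}$ and $\mathbf{Y}[L-1]$ is the final layer's vector at the last position. A single-head attention layer has $\mathbf{W}^Q,\mathbf{W}^K\in\mathbb{R}^{d_{hid}\times d}$ and $\mathbf{W}^V\in\mathbb{R}^{d\times d}$. It computes the scores $s[i,j]=(\mathbf{W}^Q\mathbf{X}[i])\cdot(\mathbf{W}^K\mathbf{X}[j])/\sqrt{d_{hid}}$. - In leftmost hard attention, $\alpha[i,j]=1$ for the smallest $j$ maximizing $s[i,j]$, and $0$ otherwise. - The layer output is $\sum_j\alpha[i,j]\mathbf{W}^V\mathbf{X}[j]$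 without a residual, or $\mathbf{X}[i]+\sum_j\alpha[i,j]\mathbf{W}^V\mathbf{X}[j]$ with a residual. A $k$-layer transformer has $k$ attention layers and any number of position-wise ReLU MLP layers. *)

From HB Require Import structures.
From mathcomp Require Import all_boot all_order all_algebra.
From mathcomp Require Import fingroup perm reals.
Set Implicit Arguments. Unset Strict Implicit. Unset Printing Implicit Defensive.
Import Order.TTheory GRing.Theory Num.Theory.
Local Open Scope ring_scope.

Section Transformer.
Variable R : realType.

(* leftmost argmax of a score vector indexed by 'I_k: the smallest index
   attaining the maximum (None only when k = 0). *)
Definition leftmost_argmax (k : nat) (s : 'I_k -> R) : option 'I_k :=
  [pick j | [forall l : 'I_k, s l <= s j] && [forall l : 'I_k, (l < j)%N ==> (s l < s j)]].

Record attn_layer (d : nat) := AttnLayer {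
  dhid : nat;
  WQ : 'M[R]_(dhid, d);
  WK : 'M[R]_(dhid, d);
  WV : 'M[R]_(d, d) }.

Definition query d (A : attn_layer d) (x : 'cV[R]_d) := WQ A *m x.
Definition key d (A : attn_layer d) (x : 'cV[R]_d) := WK A *m x.
Definition value d (A : attn_layer d) (x : 'cV[R]_d) := WV A *m x.

Definition score d L (A : attn_layer d) (X : 'I_L -> 'cV[R]_d) (i j : 'I_L) : R :=
  (\sum_(h < dhid A) query A (X i) h 0 * key A (X j) h 0) / Num.sqrt (dhid A)%:R.

Definition alpha d L (A : attn_layer d) (X : 'I_L -> 'cV[R]_d) (i j : 'I_L) : R :=
  (leftmost_argmax (score A X i) == Some j)%:R.

Definition attn_apply d L (res : bool) (A : attn_layer d) (X : 'I_L -> 'cV[R]_d)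
  (i : 'I_L) : 'cV[R]_d :=
  (if res then X i else 0) + \sum_j alpha A X i j *: value A (X j).

Definition fe_input (n : nat) (f : 'I_n -> 'I_n) (pi : {perm 'I_n}) (istar : 'I_n)
  : seq 'I_n :=
  flatten [seq [:: pi j; f (pi j)] | j <- enum 'I_n] ++ [:: istar].

Definition fe_token (n : nat) f pi istar (k : 'I_(n.*2).+1) : 'I_n :=
  nth istar (@fe_input n f pi istar) k.

Record transformer2 (n : nat) := Transformer2 {
  tok_emb : 'I_n -> 'cV[R]_7;
  pos_emb : 'I_(n.*2).+1 -> 'cV[R]_7;
  layer1 : attn_layer 7;
  layer2 : attn_layer 7;
  unemb : 'M[R]_(n, 7) }.

Section Run.
Variables (n : nat) (T : transformer2 n) (f : 'I_n -> 'I_n) (pi : {perm 'I_n})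
  (istar : 'I_n).

Definition X0 (k : 'I_(n.*2).+1) : 'cV[R]_7 :=
  tok_emb T (fe_token f pi istar k) + pos_emb T k.
Definition X1 := attn_apply true (layer1 T) X0.
Definition X2 := attn_apply false (layer2 T) X1.
Definition logits : 'cV[R]_n := unemb T *m X2 ord_max.
Definition output : option 'I_n := leftmost_argmax (fun m => logits m 0).
End Run.

(* precision: x is a fixed-point number with b integer bits and b fractional
   bits, i.e. x * 2^b is an integer and |x| <= 2^b. *)
Definition repr (b : nat) (x : R) : Prop :=
  (exists z : int, x * 2 ^+ b = z%:~R) /\ `|x| <= 2 ^+ b.

Definition repr_mx (b : nat) m k (M : 'M[R]_(m, k)) : Prop :=
  forall i j, repr b (M i j).

Definition layer_params_repr b d (A : attn_layer d) : Prop :=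
  [/\ repr_mx b (WQ A), repr_mx b (WK A) & repr_mx b (WV A)].

Definition layer_run_repr b d L (A : attn_layer d) (X : 'I_L -> 'cV[R]_d) : Prop :=
  forall i j, [/\ repr_mx b (query A (X i)), repr_mx b (key A (X i)),
                  repr_mx b (value A (X i)) & repr b (score A X i j)].

Definition precision_ok (b : nat) (n : nat) (T : transformer2 n) : Prop :=
  [/\ (forall t, repr_mx b (tok_emb T t)), (forall k, repr_mx b (pos_emb T k)),
      layer_params_repr b (layer1 T), layer_params_repr b (layer2 T)
    & repr_mx b (unemb T)] /\
  forall f pi istar,
  [/\ (forall k, repr_mx b (X0 T f pi istar k)),
      layer_run_repr b (layer1 T) (X0 T f pi istar),
      (forall k, repr_mx b (X1 T f pi istar k)),
      layer_run_repr b (layer2 T) (X1 T f pi istar)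
    & (forall k, repr_mx b (X2 T f pi istar k)) /\
      repr_mx b (logits T f pi istar)].

End Transformer.

(* Layer 1 makes every position attend to its predecessor: with position
   features (1, k, k^2) the score 2(i-1)j - j^2 = (i-1)^2 - (j-i+1)^2 peaks at
   j = i-1, and the value copies the predecessor's token t and t^2 + (k odd).
   At the last position, holding the query a, layer 2 scores position l by
   2n (a^2 - (c-a)^2 - o) + l, where c is the token at l-1 and o the parity
   of l-1 (reading 0-1 as 0). The first term is maximal iff l-1 is an even
   position holding a, i.e. l = 0 or l = 2j+1 with pi(j) = a; the term l <= 2n
   breaks this tie in favour of 2j+1, whose token is f(a). The readout
   2mt - m^2 = t^2 - (m-t)^2 then selects m = t. All parameters and
   activations are integers polynomial in n and the scores are halves of
   integers (d_hid = 4), so O(log n) bits suffice. *)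

From Pilot Require Import Defs.
From mathcomp Require Import all_boot all_order all_algebra.
From mathcomp Require Import fingroup perm reals.
From mathcomp Require Import zify ring.
Set Implicit Arguments.
Unset Strict Implicit.
Unset Printing Implicit Defensive.
Import Order.TTheory GRing.Theory Num.Theory.
Local Open Scope ring_scope.

Section HardAttention.
Variable R : realType.

Lemma leftmost_argmax_strict k (s : 'I_k -> R) J :
  (forall l, l != J -> s l < s J) -> leftmost_argmax s = Some J.
Proof.
move=> sJ; rewrite /leftmost_argmax; case: pickP => [j /andP[/forallP j_max _] | none].
  congr Some; apply/eqP; apply: contraT => jJ.
  by move: (j_max J); rewrite leNgt sJ.
case/negP: (none J); apply/andP; split; apply/forallP => l.
  by have [-> // | lJ] := eqVneq l J; exact/ltW/sJ.
by apply/implyP => lJ; apply: sJ; apply: contraTneq lJ => ->; rewrite ltnn.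
Qed.

Lemma attn_applyE d L res (A : attn_layer R d) (X : 'I_L -> 'cV[R]_d) i :
  attn_apply res A X i = (if res then X i else 0) +
    if leftmost_argmax (score A X i) is Some j then value A (X j) else 0.
Proof.
rewrite /attn_apply /alpha; congr (_ + _); case: leftmost_argmax => [j|].
  rewrite (bigD1 j) //= eqxx scale1r big1 ?addr0 // => l lj.
  by rewrite (_ : (_ == _) = false) ?scale0r //; apply: contraNF lj => /eqP[->].
by rewrite big1 // => l _; rewrite scale0r.
Qed.

End HardAttention.

Section IntegerBits.
Variable R : realType.

Definition int_bits (e : nat) (x : R) : bool := (x \is a Num.int) && (`|x| <= 2 ^+ e).

Definition mx_int_bits e m p (M : 'M[R]_(m, p)) : Prop := forall i j, int_bits e (M i j).

Lemma int_bits0 e : int_bits e 0.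
Proof. by rewrite /int_bits rpred0 normr0 exprn_ge0. Qed.

Lemma int_bits_le e e' x : (e <= e')%N -> int_bits e x -> int_bits e' x.
Proof.
move=> ee' /andP[xZ xe]; rewrite /int_bits xZ (le_trans xe) //.
by rewrite ler_weXn2l // ler1n.
Qed.

Lemma int_bitsD e x y : int_bits e x -> int_bits e y -> int_bits e.+1 (x + y).
Proof.
move=> /andP[xZ xe] /andP[yZ ye]; rewrite /int_bits rpredD //=.
by rewrite (le_trans (ler_normD _ _)) // exprS mulr2n mulrDl mul1r lerD.
Qed.

Lemma int_bitsM e1 e2 x y : int_bits e1 x -> int_bits e2 y -> int_bits (e1 + e2) (x * y).
Proof.
move=> /andP[xZ xe] /andP[yZ ye]; rewrite /int_bits rpredM //=.
by rewrite normrM exprD ler_pM.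
Qed.

Lemma int_bits_sum s e k (F : 'I_k -> R) :
  (k <= 2 ^ s)%N -> (forall i, int_bits e (F i)) -> int_bits (s + e) (\sum_i F i).
Proof.
move=> ks Fe; rewrite /int_bits rpred_sum; last by move=> i _; case/andP: (Fe i).
rewrite (le_trans (ler_norm_sum _ _ _)) //.
rewrite (le_trans (ler_sum _ (fun i _ => proj2 (andP (Fe i))))) //.
rewrite sumr_const card_ord exprD -[_ *+ k]mulr_natl.
by apply: ler_wpM2r; [exact: exprn_ge0 | rewrite -natrX ler_nat].
Qed.

Lemma mx_int_bits_le e e' m p (M : 'M[R]_(m, p)) :
  (e <= e')%N -> mx_int_bits e M -> mx_int_bits e' M.
Proof. by move=> ee' Me i j; apply: int_bits_le (Me i j). Qed.

Lemma mx_int_bitsD e m p (M N : 'M[R]_(m, p)) :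
  mx_int_bits e M -> mx_int_bits e N -> mx_int_bits e.+1 (M + N).
Proof. by move=> Me Ne i j; rewrite mxE int_bitsD. Qed.

Lemma mx_int_bits_mul s e1 e2 m d p (M : 'M[R]_(m, d)) (N : 'M[R]_(d, p)) :
  (d <= 2 ^ s)%N -> mx_int_bits e1 M -> mx_int_bits e2 N ->
  mx_int_bits (s + e1 + e2) (M *m N).
Proof.
by move=> ds Me Ne i j; rewrite mxE -addnA; apply: int_bits_sum => // k; apply: int_bitsM.
Qed.

Lemma repr_int_bits b e x : (e <= b)%N -> int_bits e x -> Defs.repr b x.
Proof.
move=> eb /andP[/intrP[z ->] ze]; split; last by rewrite (le_trans ze) ?ler_weXn2l ?ler1n.
by exists (z * 2 ^+ b); rewrite intrM rmorphXn.
Qed.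

Lemma repr_half_int_bits b e x :
  (e <= b)%N -> (0 < b)%N -> int_bits e x -> Defs.repr b (x / 2).
Proof.
case: b => // b eb _ /andP[/intrP[z ->] ze]; split.
  by exists (z * 2 ^+ b); rewrite intrM rmorphXn exprS mulrA divfK ?pnatr_eq0.
rewrite (le_trans _ (le_trans ze _)) //; last by rewrite ler_weXn2l ?ler1n.
rewrite normrM normfV [`|2|]ger0_norm //.
by apply: ler_piMr; rewrite ?normr_ge0 ?invf_le1 ?ler1n.
Qed.

Lemma repr_mx_int_bits b e m p (M : 'M[R]_(m, p)) :
  (e <= b)%N -> mx_int_bits e M -> repr_mx b M.
Proof. by move=> eb Me i j; apply: repr_int_bits eb (Me i j). Qed.

Lemma sqrt4 : Num.sqrt 4%:R = 2 :> R.
Proof. by rewrite -[4%N]/(2 ^ 2)%N natrX sqrtr_sqr ger0_norm. Qed.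

Section LayerBits.
Variables (d L : nat) (A : attn_layer R d) (X : 'I_L -> 'cV[R]_d) (s e x : nat).
Hypotheses (d_le : (d <= 2 ^ s)%N) (WV_bits : mx_int_bits e (WV A))
  (X_bits : forall k, mx_int_bits x (X k)).

Lemma attn_apply_int_bits res i : mx_int_bits (s + e + x).+1 (attn_apply res A X i).
Proof.
have value_bits k : mx_int_bits (s + e + x) (value A (X k)).
  exact: mx_int_bits_mul.
rewrite attn_applyE; apply: mx_int_bitsD.
  case: res => [|u v]; last by rewrite mxE int_bits0.
  by apply: mx_int_bits_le (X_bits i); rewrite leq_addl.
by case: leftmost_argmax => [j|u v]; rewrite ?mxE ?int_bits0.
Qed.

Lemma layer_run_repr_int_bits b :
  dhid A = 4%N -> mx_int_bits e (WQ A) -> mx_int_bits e (WK A) ->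
  ((s + e + x).*2.+2 <= b)%N -> layer_run_repr b A X.
Proof.
move=> hid4 WQ_bits WK_bits xb i j.
have sexb : (s + e + x <= b)%N by lia.
split; try by apply: repr_mx_int_bits sexb _; apply: mx_int_bits_mul.
rewrite /score (_ : Num.sqrt _ = 2); last by rewrite hid4 sqrt4.
apply: (repr_half_int_bits xb); first exact: leq_ltn_trans xb.
apply: (@int_bits_le (2 + ((s + e + x) + (s + e + x)))); first by rewrite -addnn.
apply: int_bits_sum; first by rewrite hid4.
by move=> h; apply: int_bitsM; apply: mx_int_bits_mul.
Qed.

End LayerBits.
End IntegerBits.

Section TransformerBits.
Variables (R : realType) (n : nat) (T : transformer2 R n).

Definition layer_int_bits e (A : attn_layer R 7) : Prop :=
  [/\ mx_int_bits e (WQ A), mx_int_bits e (WK A) & mx_int_bits e (WV A)].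

Definition params_int_bits e : Prop :=
  [/\ forall t, mx_int_bits e (tok_emb T t), forall k, mx_int_bits e (pos_emb T k),
      layer_int_bits e (layer1 T), layer_int_bits e (layer2 T)
    & mx_int_bits e (unemb T)].

(* 6e + 18 bounds the size of the layer-2 scores, the largest computed values. *)
Lemma precision_ok_int_bits e b :
  dhid (layer1 T) = 4%N -> dhid (layer2 T) = 4%N -> params_int_bits e ->
  (6 * e + 18 <= b)%N -> precision_ok b T.
Proof.
move=> hid1 hid2 [tok_bits pos_bits [Q1 K1 V1] [Q2 K2 V2] U_bits] eb.
have d7 : (7 <= 2 ^ 3)%N by [].
have X0_bits f pi istar k : mx_int_bits e.+1 (X0 T f pi istar k).
  exact: mx_int_bitsD.
have X1_bits f pi istar k : mx_int_bits (3 + e + e.+1).+1 (X1 T f pi istar k).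
  exact: attn_apply_int_bits.
have X2_bits f pi istar k :
    mx_int_bits (3 + e + (3 + e + e.+1).+1).+1 (X2 T f pi istar k).
  exact: attn_apply_int_bits.
have eb' : (e <= b)%N by lia.
split.
  split=> [t|k|||].
  - exact: repr_mx_int_bits eb' (tok_bits t).
  - exact: repr_mx_int_bits eb' (pos_bits k).
  - by split; apply: repr_mx_int_bits eb' _.
  - by split; apply: repr_mx_int_bits eb' _.
  - exact: repr_mx_int_bits eb' _.
move=> f pi istar; split.
- by move=> k; apply: repr_mx_int_bits (X0_bits _ _ _ k); lia.
- by apply: (layer_run_repr_int_bits d7 V1 (X0_bits f pi istar)); rewrite // -addnn; lia.
- by move=> k; apply: repr_mx_int_bits (X1_bits _ _ _ k); lia.
- by apply: (layer_run_repr_int_bits d7 V2 (X1_bits f pi istar)); rewrite // -addnn; lia.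
split; first by move=> k; apply: repr_mx_int_bits (X2_bits _ _ _ k); lia.
by apply: repr_mx_int_bits (mx_int_bits_mul d7 U_bits (X2_bits _ _ _ _)); lia.
Qed.

End TransformerBits.

Section IntegerMatrices.
Context {R : realType}.

Definition int_mx p q (G : nat -> nat -> int) : 'M[R]_(p, q) :=
  \matrix_(i < p, j < q) (G i j)%:~R.

Definition int_col p (x : nat -> int) : 'cV[R]_p := \col_(i < p) (x i)%:~R.

Definition int_mulmx q (G : nat -> nat -> int) (x : nat -> int) (i : nat) : int :=
  \sum_(j < q) G i j * x j.

Lemma int_mx_mul_col p q G x : int_mx p q G *m int_col q x = int_col p (int_mulmx q G x).
Proof.
apply/matrixP => i k; rewrite !mxE rmorph_sum.
by apply: eq_bigr => j _; rewrite !mxE rmorphM.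
Qed.

Lemma int_colD p x y : int_col p x + int_col p y = int_col p (fun i => x i + y i).
Proof. by apply/matrixP => i k; rewrite !mxE intrD. Qed.

Lemma int_bits_intr e (z : int) : (`|z| <= 2 ^ e)%N -> int_bits e (z%:~R : R).
Proof. by move=> ze; rewrite /int_bits intr_int -intr_norm -abszE pmulrn -natrX ler_nat. Qed.

Lemma int_mx_int_bits e p q G :
  (forall i j, (i < p)%N -> (j < q)%N -> (`|G i j| <= 2 ^ e)%N) ->
  mx_int_bits e (int_mx p q G).
Proof. by move=> Ge i j; rewrite mxE int_bits_intr ?Ge. Qed.

Lemma int_col_int_bits e p x :
  (forall i, (i < p)%N -> (`|x i| <= 2 ^ e)%N) -> mx_int_bits e (int_col p x).
Proof. by move=> xe i j; rewrite mxE int_bits_intr ?xe. Qed.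

Definition int_layer {d} GQ GK GV : attn_layer R d :=
  AttnLayer (int_mx 4 d GQ) (int_mx 4 d GK) (int_mx d d GV).

Lemma score_int_layer d L GQ GK GV (X : 'I_L -> 'cV[R]_d) (x : 'I_L -> nat -> int) i j :
  (forall k, X k = int_col d (x k)) ->
  score (int_layer GQ GK GV) X i j =
    (\sum_(h < 4) int_mulmx d GQ (x i) h * int_mulmx d GK (x j) h)%:~R / 2.
Proof.
move=> Xx; rewrite /score /query /key /= !Xx !int_mx_mul_col sqrt4 rmorph_sum.
by congr (_ / _); apply: eq_bigr => h _; rewrite !mxE rmorphM.
Qed.

End IntegerMatrices.

Lemma size_flatten_pairs (T I : Type) (a b : I -> T) (s : seq I) :
  size (flatten [seq [:: a j; b j] | j <- s]) = (size s).*2.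
Proof. by elim: s => //= x s IH; rewrite IH doubleS. Qed.

Lemma nth_flatten_pairs (T I : Type) (x0 : T) (y0 : I) (a b : I -> T) (s : seq I) k :
  (k < (size s).*2)%N ->
  nth x0 (flatten [seq [:: a j; b j] | j <- s]) k = (if odd k then b else a) (nth y0 s k./2).
Proof. by elim: s k => [|x s IH] [|[|k]] //= Hk; rewrite IH // negbK. Qed.

Section Tokens.
Variables (n : nat) (f : 'I_n -> 'I_n) (pi : {perm 'I_n}) (istar : 'I_n).

Lemma fe_token_even (k : 'I_(n.*2).+1) (j : 'I_n) :
  val k = j.*2 -> fe_token f pi istar k = pi j.
Proof.
move=> kE; rewrite /fe_token /fe_input nth_cat size_flatten_pairs size_enum_ord kE.
rewrite ltn_double ltn_ord (nth_flatten_pairs _ j) ?size_enum_ord ?ltn_double //.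
by rewrite odd_double doubleK nth_ord_enum.
Qed.

Lemma fe_token_odd (k : 'I_(n.*2).+1) (j : 'I_n) :
  val k = j.*2.+1 -> fe_token f pi istar k = f (pi j).
Proof.
move=> kE; rewrite /fe_token /fe_input nth_cat size_flatten_pairs size_enum_ord kE.
have j2n : (j.*2.+1 < n.*2)%N by rewrite -doubleS leq_double ltn_ord.
rewrite j2n (nth_flatten_pairs _ j) ?size_enum_ord //=.
by rewrite odd_double uphalf_double nth_ord_enum.
Qed.

Lemma fe_token_last : fe_token f pi istar ord_max = istar.
Proof. by rewrite /fe_token /fe_input nth_cat size_flatten_pairs size_enum_ord ltnn subnn. Qed.

End Tokens.

Section Construction.
Variables (R : realType) (n : nat).

(* Coordinates of the residual stream at position k with token t:
   0 -> 1, 1 -> k, 2 -> k^2, 3 -> t, 4 -> t^2 + (k odd); layer 1 fills 5 and 6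
   with coordinates 3 and 4 of position k-1. *)
Definition tok_feat (t c : nat) : int :=
  match c with 3 => t%:Z | 4 => t%:Z ^+ 2 | _ => 0 end.

Definition pos_feat (k c : nat) : int :=
  match c with 0 => 1 | 1 => k%:Z | 2 => k%:Z ^+ 2 | 4 => (odd k)%:Z | _ => 0 end.

Definition prevQ (h c : nat) : int :=
  match h, c with 0, 0 => -2 | 0, 1 => 2 | 1, 0 => -1 | _, _ => 0 end.
Definition prevK (h c : nat) : int :=
  match h, c with 0, 1 => 1 | 1, 2 => 1 | _, _ => 0 end.
Definition prevV (h c : nat) : int :=
  match h, c with 5, 3 => 1 | 6, 4 => 1 | _, _ => 0 end.

Definition lookupQ (h c : nat) : int :=
  match h, c with 0, 3 => (4 * n)%:Z | 1, 0 => - (2 * n)%:Z | 2, 0 => 1 | _, _ => 0 end.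
Definition lookupK (h c : nat) : int :=
  match h, c with 0, 5 => 1 | 1, 6 => 1 | 2, 1 => 1 | _, _ => 0 end.
Definition lookupV (h c : nat) : int :=
  match h, c with 0, 0 => 1 | 1, 3 => 1 | _, _ => 0 end.

Definition readout (m c : nat) : int :=
  match c with 0 => - m%:Z ^+ 2 | 1 => 2 * m%:Z | _ => 0 end.

Definition fe_transformer : transformer2 R n :=
  Transformer2 (fun t => int_col 7 (tok_feat t)) (fun k => int_col 7 (pos_feat k))
    (int_layer prevQ prevK prevV) (int_layer lookupQ lookupK lookupV) (int_mx n 7 readout).

Lemma fe_params_int_bits e :
  (0 < n)%N -> ((2 * n) ^ 2 <= 2 ^ e)%N -> params_int_bits fe_transformer e.
Proof.
move=> n0 ne; have le_e z : (`|z| <= (2 * n) ^ 2)%N -> (`|z| <= 2 ^ e)%N.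
  by move/leq_trans; apply.
split=> [t|k|||].
- apply: int_col_int_bits => c _; apply: le_e; have := ltn_ord t.
  by case: c => [|[|[|[|[|c]]]]] /=; nia.
- apply: int_col_int_bits => c _; apply: le_e; have := ltn_ord k.
  by case: c => [|[|[|[|[|c]]]]] /=; case: (odd k); nia.
- by split; apply: int_mx_int_bits => h c _ _; apply: le_e;
    case: h => [|[|[|[|[|[|[|h]]]]]]]; case: c => [|[|[|[|[|c]]]]] /=; nia.
- by split; apply: int_mx_int_bits => h c _ _; apply: le_e;
    case: h => [|[|[|h]]]; case: c => [|[|[|[|[|[|[|c]]]]]]] /=; nia.
- apply: int_mx_int_bits => m c mn _; apply: le_e.
  by case: c => [|[|c]] /=; nia.
Qed.

Section Correctness.
Variables (f : 'I_n -> 'I_n) (pi : {perm 'I_n}) (istar : 'I_n).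
Local Notation T := fe_transformer.
Local Notation L := (n.*2).+1.

Definition tok (k : 'I_L) : nat := fe_token f pi istar k.

Definition x0 (k : 'I_L) (c : nat) : int := tok_feat (tok k) c + pos_feat k c.

Lemma X0_int_col k : X0 T f pi istar k = int_col 7 (x0 k).
Proof. exact: int_colD. Qed.

Lemma prev_score i j :
  score (layer1 T) (X0 T f pi istar) i j = (2 * (i%:Z - 1) * j%:Z - j%:Z ^+ 2)%:~R / 2.
Proof.
rewrite (score_int_layer _ _ _ _ _ X0_int_col) /int_mulmx.
by rewrite !big_ord_recr !big_ord0 /= /x0 /=; congr (_%:~R / _); ring.
Qed.

(* [prev_pos 0 = 0]: position 0 attends to itself in layer 1. *)
Definition prev_pos (k : 'I_L) : 'I_L := Ordinal (leq_ltn_trans (leq_pred k) (ltn_ord k)).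

Lemma prev_argmax i :
  leftmost_argmax (score (layer1 T) (X0 T f pi istar) i) = Some (prev_pos i).
Proof.
apply: leftmost_argmax_strict => j ji; rewrite !prev_score ltr_pM2r ?invr_gt0 // ltr_int /=.
have : (j != i.-1 :> nat) by apply: contraNneq ji => ji; apply/eqP/val_inj.
by case: (nat_of_ord i) => [|I] /=; nia.
Qed.

Definition x1 (k : 'I_L) (c : nat) : int :=
  match c with 5 => x0 (prev_pos k) 3 | 6 => x0 (prev_pos k) 4 | _ => x0 k c end.

Lemma X1_int_col k : X1 T f pi istar k = int_col 7 (x1 k).
Proof.
rewrite /X1 attn_applyE prev_argmax /value /= !X0_int_col int_mx_mul_col int_colD.
apply/matrixP => c j; rewrite !mxE /int_mulmx !big_ord_recr !big_ord0 /=.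
by case: c => [[|[|[|[|[|[|[|c]]]]]]] ?] //=; congr _%:~R; ring.
Qed.

Lemma lookup_score i l :
  score (layer2 T) (X1 T f pi istar) i l =
    ((4 * n)%:Z * (tok i)%:Z * (tok (prev_pos l))%:Z
     - (2 * n)%:Z * ((tok (prev_pos l))%:Z ^+ 2 + (odd (prev_pos l))%:Z) + l%:Z)%:~R / 2.
Proof.
rewrite (score_int_layer _ _ _ _ _ X1_int_col) /int_mulmx.
by rewrite !big_ord_recr !big_ord0 /= /x0 /=; congr (_%:~R / _); ring.
Qed.

Definition istar_index : 'I_n := (pi^-1)%g istar.

Lemma answer_pos_subproof : (istar_index.*2.+1 < L)%N.
Proof. by rewrite ltnS ltn_double. Qed.

Definition answer_pos : 'I_L := Ordinal answer_pos_subproof.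

Lemma tok_last : tok ord_max = istar.
Proof. by rewrite /tok fe_token_last. Qed.

Lemma even_prev_answer_pos : ~~ odd (prev_pos answer_pos).
Proof. by rewrite /= odd_double. Qed.

Lemma tok_prev_answer_pos : tok (prev_pos answer_pos) = istar.
Proof. by rewrite /tok (fe_token_even _ _ _ (j := istar_index)) ?permKV. Qed.

Lemma tok_answer_pos : tok answer_pos = f istar.
Proof. by rewrite /tok (fe_token_odd _ _ _ (j := istar_index)) ?permKV. Qed.

Lemma prev_tok_istar l :
  tok (prev_pos l) = istar -> ~~ odd (prev_pos l) -> val l = 0%N \/ l = answer_pos.
Proof.
case: l => [[|l] lL] tok_l even_l; [by left | right].
rewrite /prev_pos /= in tok_l even_l.
have l2n : (l < n.*2)%N by rewrite -ltnS.
have half_l : (l./2 < n)%N.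
  by rewrite -ltn_double (leq_ltn_trans _ l2n) // -{2}(odd_double_half l) leq_addl.
have l_even : l = (Ordinal half_l).*2 by rewrite -{1}(odd_double_half l) (negbTE even_l).
apply: val_inj => /=; congr _.+1; rewrite {1}l_even; congr _.*2; congr val.
apply: (@perm_inj _ pi); apply: val_inj => /=; rewrite permKV -tok_l /tok.
by rewrite (fe_token_even _ _ _ (j := Ordinal half_l)).
Qed.

Lemma lookup_argmax :
  leftmost_argmax (score (layer2 T) (X1 T f pi istar) ord_max) = Some answer_pos.
Proof.
apply: leftmost_argmax_strict => l lJ; rewrite !lookup_score ltr_pM2r ?invr_gt0 // ltr_int.
rewrite tok_last tok_prev_answer_pos (negbTE even_prev_answer_pos).
have J_pos : (0 < answer_pos)%N by [].
have l_le : (l <= n.*2)%N by rewrite -ltnS.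
case: (boolP ((tok (prev_pos l) == istar) && ~~ odd (prev_pos l))).
  case/andP=> /eqP tok_l odd_l.
  case: (prev_tok_istar tok_l odd_l) => [l0 | lJ']; last by rewrite lJ' eqxx in lJ.
  by rewrite tok_l (negbTE odd_l) l0; nia.
move=> bad.
have penalty : 1 <= ((tok (prev_pos l))%:Z - istar%:Z) ^+ 2 + (odd (prev_pos l))%:Z.
  by move: bad; rewrite negb_and negbK; case/orP => [/eqP | ->]; nia.
nia.
Qed.

Lemma logitsE m : logits T f pi istar m 0 = (2 * m%:Z * (f istar)%:Z - m%:Z ^+ 2)%:~R.
Proof.
rewrite /logits /X2 attn_applyE lookup_argmax /value /= add0r X1_int_col.
rewrite !int_mx_mul_col mxE /int_mulmx !big_ord_recr !big_ord0 /= /x0 /= tok_answer_pos.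
by congr _%:~R; ring.
Qed.

Lemma fe_transformer_correct : output T f pi istar = Some (f istar).
Proof.
apply: leftmost_argmax_strict => m mf; rewrite !logitsE ltr_int.
have : (m != f istar :> nat) by apply: contraNneq mf => mf; apply/eqP/val_inj.
nia.
Qed.

End Correctness.
End Construction.

Theorem theorem9 (R : realType) :
  exists C : nat, forall n : nat, (0 < n)%N ->
  exists T : transformer2 R n,
    precision_ok (C * (trunc_log 2 n).+1) T /\
    forall (f : 'I_n -> 'I_n) (pi : {perm 'I_n}) (istar : 'I_n),
      output T f pi istar = Some (f istar).
Proof.
exists 42%N => n n0; exists (fe_transformer R n).
split; last by move=> f pi istar; apply: fe_transformer_correct.
set w := (trunc_log 2 n).+1.
have n_lt : (n < 2 ^ w)%N by apply: trunc_log_ltn.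
apply: (@precision_ok_int_bits _ _ _ w.*2.+2) => //; last by rewrite /w; lia.
apply: fe_params_int_bits => //.
by rewrite -doubleS -muln2 expnM leq_sqr expnS leq_mul2l ltnW.
Qed.
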